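(* Let $f\colon\mathbb{R}^2\to\mathbb{R}^3$ be a regular smooth surface parametrization without parabolic and umbilic points, oriented by a smooth unit normal field $n$, with principal curvatures $\kappa_1\neq\kappa_2$ (both nonzero) with respect to $n$. Let $s$ be an attached tangent sphere congruence of $f$ with signed radius function $r$ (definitions in the context). Let $(t_1,t_2,n)$ be an orthonormal principal frame at a point $f(u,v)$, $t_i$ being the principal direction of $\kappa_i$. Then two non-parallel tangent vectors $\bar a=\bar a_1t_1+\bar a_2t_2$ and $\bar b=\bar b_1t_1+\bar b_2t_2$ at $f(u,v)$ are L-conjugate with respect to $s$ if and only if $$(\kappa_2^{-1}-r)\,\bar a_1\bar b_1+(\kappa_1^{-1}-r)\,\bar a_2\bar b_2=0,$$ where $r$ and $\kappa_1,\kappa_2$ are evaluated at $(u,v)$.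
   Context: $\mathbb{R}^{3,1}$ is $\mathbb{R}^4$ with inner product $\langle\langle X,Y\rangle\rangle=X_1Y_1+X_2Y_2+X_3Y_3-X_4Y_4$. Principal curvatures are the eigenvalues of the shape operator $-dn$ (so in a principal parametrization $n_u=-\kappa_1 f_u$, $n_v=-\kappa_2f_v$). Two tangent vectors $a,\bar a$ are conjugate (in the ordinary sense) if $\mathrm{II}(a,\bar a)=0$ for the second fundamental form with respect to $n$; in a principal frame this reads $\kappa_1a_1\bar a_1+\kappa_2a_2\bar a_2=0$. An oriented sphere is a pair $(c,\rho)$ with center $c\in\mathbb{R}^3$ and signed radius $\rho\in\mathbb{R}$ (radius zero allowed). The oriented tangent plane $p(u,v)$ at $f(u,v)$ is the plane through $f(u,v)$ with unit normal $n(u,v)$; it is written $\langle n,x\rangle+h=0$ with $h=-\langle n,f\rangle$. An attached tangent sphere congruence is a map assigning to each $(u,v)$ an oriented sphere $s(u,v)$ with signed radius $r(u,v)$ and center $f(u,v)+r(u,v)n(u,v)$ (i.e., in oriented contact with $p(u,v)$ at $f(u,v)$) such that its Minkowski lift $S(u,v):=(f+rn,\,r)\in\mathbb{R}^{3,1}$ is a regular smooth net ($S_u\not\parallel S_v$). The Minkowski lift of $p(u,v)$ is the isotropic hyperplane $P(u,v)=\{(x,x_4): x_4=\langle n,x\rangle+h\}$, with normal $N=(n,1)$. For a regular net $S$ with attached hyperplanes $P$, two non-parallel tangent vectors $T_1,T_2$ of $S$ are L-conjugate with respect to $P$ if there is a diffeomorphism $D$ of $\mathbb{R}^2$ such that for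 $\bar S=S\circ D,\bar P=P\circ D$, at the relevant parameter, $\bar S_u\parallel T_1$, $\bar S_v\parallel T_2$ and $\bar S_u,\bar S_v,\bar S_{uv}$ are parallel to $\bar P$. Two non-parallel tangent vectors $a,b$ of $f$ at $f(u,v)$ are L-conjugate with respect to $s$ if there is a diffeomorphism $D$ of $\mathbb{R}^2$ such that, with $\bar f=f\circ D$ and $\bar S,\bar P$ the Minkowski lifts of $s\circ D,p\circ D$, at the relevant parameter $\bar f_u$ is conjugate to $a$, $\bar f_v$ is conjugate to $b$, and $\bar S_u$ is L-conjugate to $\bar S_v$ with respect to $\bar P$. *)

From Stdlib Require Import Reals.
From Coquelicot Require Import Coquelicot.
Open Scope R_scope.

Definition Fun2 := R -> R -> R.

Definition du (g : Fun2) : Fun2 := fun u v => Derive (fun x => g x v) u.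
Definition dv (g : Fun2) : Fun2 := fun u v => Derive (fun y => g u y) v.

Definition cont2 (g : Fun2) : Prop :=
  forall u v eps, 0 < eps -> exists delta, 0 < delta /\
    forall u' v', Rabs (u' - u) < delta -> Rabs (v' - v) < delta ->
      Rabs (g u' v' - g u v) < eps.

Definition partials_exist (g : Fun2) : Prop :=
  forall u v, ex_derive (fun x => g x v) u /\ ex_derive (fun y => g u y) v.

Fixpoint Ck (k : nat) (g : Fun2) : Prop :=
  match k with
  | O => cont2 g
  | S k' => cont2 g /\ partials_exist g /\ Ck k' (du g) /\ Ck k' (dv g)
  end.

Definition smooth2 (g : Fun2) : Prop := forall k, Ck k g.

Definition diffeo2 (d1 d2 : Fun2) : Prop :=
  smooth2 d1 /\ smooth2 d2 /\
  exists e1 e2 : Fun2, smooth2 e1 /\ smooth2 e2 /\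
    (forall u v, e1 (d1 u v) (d2 u v) = u /\ e2 (d1 u v) (d2 u v) = v) /\
    (forall u v, d1 (e1 u v) (e2 u v) = u /\ d2 (e1 u v) (e2 u v) = v).

Record V3 := mkV3 { x1 : R; x2 : R; x3 : R }.
Definition add3 (a b : V3) := mkV3 (x1 a + x1 b) (x2 a + x2 b) (x3 a + x3 b).
Definition scal3 (l : R) (a : V3) := mkV3 (l * x1 a) (l * x2 a) (l * x3 a).
Definition dot3 (a b : V3) := x1 a * x1 b + x2 a * x2 b + x3 a * x3 b.
Definition zero3 := mkV3 0 0 0.
Definition indep3 (a b : V3) : Prop :=
  forall l m, add3 (scal3 l a) (scal3 m b) = zero3 -> l = 0 /\ m = 0.

Record V4 := mkV4 { y1 : R; y2 : R; y3 : R; y4 : R }.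
Definition add4 (a b : V4) :=
  mkV4 (y1 a + y1 b) (y2 a + y2 b) (y3 a + y3 b) (y4 a + y4 b).
Definition scal4 (l : R) (a : V4) :=
  mkV4 (l * y1 a) (l * y2 a) (l * y3 a) (l * y4 a).
Definition zero4 := mkV4 0 0 0 0.
Definition mink (a b : V4) := y1 a * y1 b + y2 a * y2 b + y3 a * y3 b - y4 a * y4 b.
Definition indep4 (a b : V4) : Prop :=
  forall l m, add4 (scal4 l a) (scal4 m b) = zero4 -> l = 0 /\ m = 0.
Definition parallel4 (a b : V4) : Prop := ~ indep4 a b.

Definition comp3 (F : R -> R -> V3) (d1 d2 : Fun2) : R -> R -> V3 :=
  fun u v => F (d1 u v) (d2 u v).
Definition comp4 (F : R -> R -> V4) (d1 d2 : Fun2) : R -> R -> V4 :=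
  fun u v => F (d1 u v) (d2 u v).

Definition du3 (F : R -> R -> V3) : R -> R -> V3 := fun u v =>
  mkV3 (du (fun a b => x1 (F a b)) u v) (du (fun a b => x2 (F a b)) u v)
       (du (fun a b => x3 (F a b)) u v).
Definition dv3 (F : R -> R -> V3) : R -> R -> V3 := fun u v =>
  mkV3 (dv (fun a b => x1 (F a b)) u v) (dv (fun a b => x2 (F a b)) u v)
       (dv (fun a b => x3 (F a b)) u v).
Definition du4 (F : R -> R -> V4) : R -> R -> V4 := fun u v =>
  mkV4 (du (fun a b => y1 (F a b)) u v) (du (fun a b => y2 (F a b)) u v)
       (du (fun a b => y3 (F a b)) u v) (du (fun a b => y4 (F a b)) u v).
Definition dv4 (F : R -> R -> V4) : R -> R -> V4 := fun u v =>
  mkV4 (dv (fun a b => y1 (F a b)) u v) (dv (fun a b => y2 (F a b)) u v)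
       (dv (fun a b => y3 (F a b)) u v) (dv (fun a b => y4 (F a b)) u v).

Definition smooth3 (F : R -> R -> V3) : Prop :=
  smooth2 (fun u v => x1 (F u v)) /\ smooth2 (fun u v => x2 (F u v)) /\
  smooth2 (fun u v => x3 (F u v)).
Definition smooth4 (F : R -> R -> V4) : Prop :=
  smooth2 (fun u v => y1 (F u v)) /\ smooth2 (fun u v => y2 (F u v)) /\
  smooth2 (fun u v => y3 (F u v)) /\ smooth2 (fun u v => y4 (F u v)).

Definition regular_surface (f : R -> R -> V3) : Prop :=
  smooth3 f /\ forall u v, indep3 (du3 f u v) (dv3 f u v).

Definition unit_normal (f n : R -> R -> V3) : Prop :=
  smooth3 n /\ forall u v, dot3 (n u v) (n u v) = 1 /\
    dot3 (n u v) (du3 f u v) = 0 /\ dot3 (n u v) (dv3 f u v) = 0.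

(* shape operator -dn applied to the tangent vector x f_u + y f_v *)
Definition shape (n : R -> R -> V3) (u v x y : R) : V3 :=
  scal3 (-1) (add3 (scal3 x (du3 n u v)) (scal3 y (dv3 n u v))).
Definition tangent (f : R -> R -> V3) (u v x y : R) : V3 :=
  add3 (scal3 x (du3 f u v)) (scal3 y (dv3 f u v)).

Definition principal_dir (f n : R -> R -> V3) (u v k : R) (t : V3) : Prop :=
  t <> zero3 /\ exists x y, t = tangent f u v x y /\ shape n u v x y = scal3 k t.

Definition principal_curvature (f n : R -> R -> V3) (u v k : R) : Prop :=
  exists t, principal_dir f n u v k t.

(* ordinary conjugacy of tangent vectors w, w' at f(u,v): II(w,w') = 0 *)
Definition conjugate (f n : R -> R -> V3) (u v : R) (w w' : V3) : Prop :=
  exists x y, w = tangent f u v x y /\ dot3 (shape n u v x y) w' = 0.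

(* lift of the attached tangent sphere s(u,v): S = (f + r n, r) *)
Definition sphere_lift (f n : R -> R -> V3) (r : Fun2) : R -> R -> V4 :=
  fun u v => let c := add3 (f u v) (scal3 (r u v) (n u v)) in
             mkV4 (x1 c) (x2 c) (x3 c) (r u v).

Definition tangent_sphere_congruence (f n : R -> R -> V3) (r : Fun2) : Prop :=
  smooth2 r /\ smooth4 (sphere_lift f n r) /\
  forall u v, indep4 (du4 (sphere_lift f n r) u v) (dv4 (sphere_lift f n r) u v).

(* X is parallel to the isotropic hyperplane P = {x4 = <n,x> + h},
   i.e. X4 = <n, (X1,X2,X3)>  (equivalently <<X,(n,1)>> = 0) *)
Definition par_hyp (nn : V3) (X : V4) : Prop :=
  y4 X = dot3 nn (mkV3 (y1 X) (y2 X) (y3 X)).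

(* L-conjugacy of tangent vectors T1, T2 of the net S at parameter (p,q) with
   respect to the attached hyperplanes P, whose normals are (nn,1). *)
Definition L_conj_net (S : R -> R -> V4) (nn : R -> R -> V3) (p q : R)
    (T1 T2 : V4) : Prop :=
  indep4 T1 T2 /\
  exists e1 e2 : Fun2, diffeo2 e1 e2 /\
  exists p' q', e1 p' q' = p /\ e2 p' q' = q /\
    let Sb := comp4 S e1 e2 in
    let nb := comp3 nn e1 e2 in
    parallel4 (du4 Sb p' q') T1 /\ parallel4 (dv4 Sb p' q') T2 /\
    par_hyp (nb p' q') (du4 Sb p' q') /\
    par_hyp (nb p' q') (dv4 Sb p' q') /\
    par_hyp (nb p' q') (dv4 (du4 Sb) p' q').

Definition L_conj_sphere (f n : R -> R -> V3) (r : Fun2) (u v : R) (a b : V3)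
    : Prop :=
  indep3 a b /\
  exists d1 d2 : Fun2, diffeo2 d1 d2 /\
  exists p q, d1 p q = u /\ d2 p q = v /\
    let fb := comp3 f d1 d2 in
    let nb := comp3 n d1 d2 in
    let Sb := comp4 (sphere_lift f n r) d1 d2 in
    conjugate f n u v (du3 fb p q) a /\
    conjugate f n u v (dv3 fb p q) b /\
    L_conj_net Sb nb p q (du4 Sb p q) (dv4 Sb p q).

From Stdlib Require Import Reals Lra.
From Coquelicot Require Import Coquelicot Derive_2d.
Open Scope R_scope.

(* The Minkowski lift S = (f + r n, r) of the sphere congruence is tangent to the isotropic
   hyperplanes with normal N = (n, 1): <<S_u, N>> = <<S_v, N>> = 0, also after any
   reparametrization. Differentiating once more gives
   <<S_uv, N>> = - <<S_u, N_v>> = (II - r III)(f_u, f_v), so the coordinate directions of a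
   reparametrized lift are L-conjugate exactly when II - r III vanishes on the corresponding
   tangent directions of f; a further reparametrization only rescales these directions.
   Hence a and b are L-conjugate iff some independent tangent directions, conjugate to a and
   to b respectively, are orthogonal for II - r III. In the principal frame the direction
   conjugate to a1 t1 + a2 t2 is k2 a2 t1 - k1 a1 t2, and II - r III = diag (k1 - r k1^2,
   k2 - r k2^2) evaluated on the two conjugate directions gives
   k1^2 k2^2 ((1/k2 - r) a1 b1 + (1/k1 - r) a2 b2). *)

Lemma cross2_eq0_dependent a1 a2 b1 b2 :
  a1 * b2 - a2 * b1 = 0 ->
  exists l m, (l <> 0 \/ m <> 0) /\ l * a1 + m * b1 = 0 /\ l * a2 + m * b2 = 0.
Proof.
  intros D.
  destruct (Req_dec b1 0) as [Hb1 | Hb1]; [destruct (Req_dec a1 0) as [Ha1 | Ha1] |].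
  - destruct (Req_dec b2 0) as [Hb2 | Hb2].
    + exists 0, 1; split; [right; lra | subst; split; ring].
    + exists b2, (- a2); split; [now left | subst; split; ring].
  - exists b1, (- a1); split; [now right; lra | split; lra].
  - exists b1, (- a1); split; [now left | split; lra].
Qed.

Lemma cross2_neq0_trivial a1 a2 b1 b2 l m :
  a1 * b2 - a2 * b1 <> 0 -> l * a1 + m * b1 = 0 -> l * a2 + m * b2 = 0 -> l = 0 /\ m = 0.
Proof.
  intros D E1 E2.
  assert (El : l * (a1 * b2 - a2 * b1) = b2 * (l * a1 + m * b1) - b1 * (l * a2 + m * b2))
    by ring.
  assert (Em : m * (a1 * b2 - a2 * b1) = a1 * (l * a2 + m * b2) - a2 * (l * a1 + m * b1))
    by ring.
  rewrite E1, E2, !Rmult_0_r, Rminus_0_r in El, Em.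
  split; [destruct (Rmult_integral _ _ El) | destruct (Rmult_integral _ _ Em)]; tauto.
Qed.

Lemma cross2_neq0_solve a1 a2 b1 b2 w1 w2 :
  a1 * b2 - a2 * b1 <> 0 -> exists c1 c2, w1 = c1 * a1 + c2 * b1 /\ w2 = c1 * a2 + c2 * b2.
Proof.
  intros D; exists ((w1 * b2 - w2 * b1) / (a1 * b2 - a2 * b1)),
                   ((a1 * w2 - a2 * w1) / (a1 * b2 - a2 * b1)).
  split; field; exact D.
Qed.

Lemma cross2_eq0_scal x1 x2 y1 y2 z1 z2 :
  x1 * y2 - x2 * y1 = 0 -> y1 * z2 - y2 * z1 <> 0 -> exists l, x1 = l * y1 /\ x2 = l * y2.
Proof.
  intros Dx Dy; destruct (cross2_neq0_solve y1 y2 z1 z2 x1 x2 Dy) as (l & m & E1 & E2).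
  exists l; enough (m = 0) by (subst; split; ring).
  assert (Hm : m * (y1 * z2 - y2 * z1) = - (x1 * y2 - x2 * y1)) by (rewrite E1, E2; ring).
  rewrite Dx, Ropp_0 in Hm.
  destruct (Rmult_integral _ _ Hm); tauto.
Qed.

Lemma cross2_parallel_basis x1 x2 y1 y2 g1 g2 h1 h2 :
  g1 * h2 - g2 * h1 <> 0 -> x1 * g2 - x2 * g1 = 0 -> y1 * h2 - y2 * h1 = 0 ->
  x1 * y2 - x2 * y1 <> 0 ->
  exists l m, l * m <> 0 /\ x1 = l * g1 /\ x2 = l * g2 /\ y1 = m * h1 /\ y2 = m * h2.
Proof.
  intros Dgh Dx Dy Dxy.
  destruct (cross2_eq0_scal x1 x2 g1 g2 h1 h2 Dx Dgh) as (l & Ex1 & Ex2).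
  destruct (cross2_eq0_scal y1 y2 h1 h2 g1 g2 Dy) as (m & Ey1 & Ey2); [contradict Dgh; lra|].
  exists l, m; repeat split; try assumption.
  intros Z; apply Dxy; rewrite Ex1, Ex2, Ey1, Ey2.
  transitivity (l * m * (g1 * h2 - g2 * h1)); [ring | rewrite Z; ring].
Qed.

(** * Calculus in two variables *)

Lemma cont2_continuity_2d_pt (g : Fun2) :
  cont2 g <-> forall x y, continuity_2d_pt g x y.
Proof.
  split.
  - intros Hg x y eps.
    destruct (Hg x y eps (cond_pos eps)) as [d [Hd Hball]].
    exists (mkposreal d Hd); exact Hball.
  - intros Hg x y eps Heps.
    destruct (Hg x y (mkposreal eps Heps)) as [d Hball].
    exists d; split; [apply cond_pos | exact Hball].
Qed.

Lemma Ck_ex_diff_n k : forall g, Ck k g -> forall x y, ex_diff_n g k x y.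
Proof.
  induction k as [|k IH]; intros g Hg x y.
  - split; [now apply cont2_continuity_2d_pt | exact I].
  - destruct Hg as (Hc & Hp & Hu & Hv); destruct (Hp x y) as [Pu Pv].
    split; [now apply cont2_continuity_2d_pt|].
    exact (conj Pu (conj Pv (conj (IH _ Hu x y) (IH _ Hv x y)))).
Qed.

Lemma smooth2_du g : smooth2 g -> smooth2 (du g).
Proof. intros Hg k; exact (proj1 (proj2 (proj2 (Hg (S k))))). Qed.

Lemma smooth2_dv g : smooth2 g -> smooth2 (dv g).
Proof. intros Hg k; exact (proj2 (proj2 (proj2 (Hg (S k))))). Qed.

Lemma smooth2_partials_exist g : smooth2 g -> partials_exist g.
Proof. intros Hg; exact (proj1 (proj2 (Hg 1%nat))). Qed.

Lemma smooth2_ex_derive_u g x y : smooth2 g -> ex_derive (fun s => g s y) x.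
Proof. intros Hg; exact (proj1 (smooth2_partials_exist g Hg x y)). Qed.

Lemma smooth2_ex_derive_v g x y : smooth2 g -> ex_derive (fun s => g x s) y.
Proof. intros Hg; exact (proj2 (smooth2_partials_exist g Hg x y)). Qed.

Lemma DL_regular_1_differentiable g x y :
  DL_regular_n g 1 x y -> differentiable_pt_lim g x y (du g x y) (dv g x y).
Proof.
  intros [D [d Hd]] eps.
  set (K := Rabs D + 1).
  assert (HK : 0 < K) by (unfold K; pose proof (Rabs_pos D); lra).
  assert (HDK : D <= K) by (unfold K; pose proof (Rle_abs D); lra).
  assert (Hd' : 0 < Rmin d (eps / K))
    by (apply Rmin_pos; [apply cond_pos | apply Rdiv_lt_0_compat; [apply cond_pos | lra]]).
  exists (mkposreal _ Hd'); simpl; intros u' v' Hu Hv.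
  specialize (Hd u' v' (Rlt_le_trans _ _ _ Hu (Rmin_l _ _))
                (Rlt_le_trans _ _ _ Hv (Rmin_l _ _))).
  replace (DL_pol 1 g x y (u' - x) (v' - y))
    with (g x y + (du g x y * (u' - x) + dv g x y * (v' - y))) in Hd
    by (unfold DL_pol, differential, partial_derive, Binomial.C, du, dv; simpl; field).
  set (M := Rmax (Rabs (u' - x)) (Rabs (v' - y))) in *.
  assert (HM0 : 0 <= M) by (unfold M; eapply Rle_trans; [apply Rabs_pos | apply Rmax_l]).
  assert (HM : M < eps / K)
    by (apply Rmax_lub_lt; eapply Rlt_le_trans; eauto; apply Rmin_r).
  assert (HKM : K * M <= eps).
  { apply Rlt_le, (Rmult_le_compat_l K) in HM; [|lra].
    now replace (K * (eps / K)) with (pos eps) in HM by (field; lra). }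
  replace (g u' v' - g x y - _)
    with (g u' v' - (g x y + (du g x y * (u' - x) + dv g x y * (v' - y)))) by ring.
  eapply Rle_trans; [exact Hd|]; simpl; nra.
Qed.

Lemma smooth2_differentiable g x y :
  smooth2 g -> differentiable_pt_lim g x y (du g x y) (dv g x y).
Proof.
  intros Hg; apply DL_regular_1_differentiable, Taylor_Lagrange_2d.
  exists (mkposreal 1 Rlt_0_1); intros; apply Ck_ex_diff_n, Hg.
Qed.

Lemma is_derive_comp2 g (a b : R -> R) t :
  smooth2 g -> ex_derive a t -> ex_derive b t ->
  is_derive (fun s => g (a s) (b s)) t
    (du g (a t) (b t) * Derive a t + dv g (a t) (b t) * Derive b t).
Proof.
  intros Hg Ha Hb; apply is_derive_Reals, derivable_pt_lim_comp_2d.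
  - apply smooth2_differentiable, Hg.
  - apply is_derive_Reals, Derive_correct, Ha.
  - apply is_derive_Reals, Derive_correct, Hb.
Qed.

Lemma du_comp g G1 G2 x y :
  smooth2 g -> ex_derive (fun s => G1 s y) x -> ex_derive (fun s => G2 s y) x ->
  du (fun a b => g (G1 a b) (G2 a b)) x y
  = du g (G1 x y) (G2 x y) * du G1 x y + dv g (G1 x y) (G2 x y) * du G2 x y.
Proof. intros Hg H1 H2; apply is_derive_unique, (is_derive_comp2 g _ _ x Hg H1 H2). Qed.

Lemma dv_comp g G1 G2 x y :
  smooth2 g -> ex_derive (fun s => G1 x s) y -> ex_derive (fun s => G2 x s) y ->
  dv (fun a b => g (G1 a b) (G2 a b)) x y
  = du g (G1 x y) (G2 x y) * dv G1 x y + dv g (G1 x y) (G2 x y) * dv G2 x y.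
Proof. intros Hg H1 H2; apply is_derive_unique, (is_derive_comp2 g _ _ y Hg H1 H2). Qed.

Definition has_mixed_partial (g : Fun2) : Prop :=
  partials_exist g /\ forall x y, ex_derive (fun s => du g x s) y.

Lemma smooth2_has_mixed_partial g : smooth2 g -> has_mixed_partial g.
Proof.
  intros Hg; split; [now apply smooth2_partials_exist|].
  intros x y; apply smooth2_ex_derive_v, smooth2_du, Hg.
Qed.

Lemma has_mixed_partial_comp g e1 e2 :
  smooth2 g -> has_mixed_partial e1 -> has_mixed_partial e2 ->
  has_mixed_partial (fun a b => g (e1 a b) (e2 a b)).
Proof.
  intros Hg [P1 M1] [P2 M2]; split.
  - intros x y; destruct (P1 x y) as [U1 V1], (P2 x y) as [U2 V2].
    split; eexists; apply is_derive_comp2; assumption.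
  - intros x y; destruct (P1 x y) as [_ V1], (P2 x y) as [_ V2].
    apply ex_derive_ext with (fun s => du g (e1 x s) (e2 x s) * du e1 x s
                                       + dv g (e1 x s) (e2 x s) * du e2 x s).
    { intros s; symmetry; exact (du_comp g e1 e2 x s Hg (proj1 (P1 x s)) (proj1 (P2 x s))). }
    apply (ex_derive_plus (fun s => du g (e1 x s) (e2 x s) * du e1 x s)
                          (fun s => dv g (e1 x s) (e2 x s) * du e2 x s));
      apply ex_derive_mult.
    + eexists; exact (is_derive_comp2 (du g) _ _ y (smooth2_du g Hg) V1 V2).
    + exact (M1 x y).
    + eexists; exact (is_derive_comp2 (dv g) _ _ y (smooth2_dv g Hg) V1 V2).
    + exact (M2 x y).
Qed.

Definition jac (G1 G2 : Fun2) (x y : R) : R :=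
  du G1 x y * dv G2 x y - du G2 x y * dv G1 x y.

Lemma jac_comp G1 G2 e1 e2 x y :
  smooth2 G1 -> smooth2 G2 -> partials_exist e1 -> partials_exist e2 ->
  jac (fun a b => G1 (e1 a b) (e2 a b)) (fun a b => G2 (e1 a b) (e2 a b)) x y
  = jac G1 G2 (e1 x y) (e2 x y) * jac e1 e2 x y.
Proof.
  intros S1 S2 P1 P2; destruct (P1 x y) as [U1 V1], (P2 x y) as [U2 V2]; unfold jac.
  rewrite (du_comp G1 e1 e2 x y S1 U1 U2), (du_comp G2 e1 e2 x y S2 U1 U2),
    (dv_comp G1 e1 e2 x y S1 V1 V2), (dv_comp G2 e1 e2 x y S2 V1 V2); ring.
Qed.

Lemma diffeo2_jac_neq0 d1 d2 x y : diffeo2 d1 d2 -> jac d1 d2 x y <> 0.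
Proof.
  intros (S1 & S2 & e1 & e2 & T1 & T2 & Hinv & _).
  assert (Hid : jac (fun a b => e1 (d1 a b) (d2 a b)) (fun a b => e2 (d1 a b) (d2 a b)) x y = 1).
  { unfold jac, du, dv.
    rewrite (Derive_ext (fun s => e1 (d1 s y) (d2 s y)) (fun s => s))
      by (intros s; exact (proj1 (Hinv s y))).
    rewrite (Derive_ext (fun s => e2 (d1 x s) (d2 x s)) (fun s => s))
      by (intros s; exact (proj2 (Hinv x s))).
    rewrite (Derive_ext (fun s => e1 (d1 x s) (d2 x s)) (fun _ => x))
      by (intros s; exact (proj1 (Hinv x s))).
    rewrite (Derive_ext (fun s => e2 (d1 s y) (d2 s y)) (fun _ => y))
      by (intros s; exact (proj2 (Hinv s y))).
    rewrite !Derive_id, !Derive_const; ring. }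
  rewrite (jac_comp e1 e2 d1 d2 x y T1 T2 (smooth2_partials_exist d1 S1)
             (smooth2_partials_exist d2 S2)) in Hid.
  intros Z; rewrite Z, Rmult_0_r in Hid; lra.
Qed.

Lemma jac_comp_diffeo2_neq0 G1 G2 e1 e2 x y :
  smooth2 G1 -> smooth2 G2 -> diffeo2 e1 e2 -> jac G1 G2 (e1 x y) (e2 x y) <> 0 ->
  jac (fun a b => G1 (e1 a b) (e2 a b)) (fun a b => G2 (e1 a b) (e2 a b)) x y <> 0.
Proof.
  intros S1 S2 He JG; pose proof He as (Se1 & Se2 & _).
  rewrite (jac_comp G1 G2 e1 e2 x y S1 S2 (smooth2_partials_exist e1 Se1)
             (smooth2_partials_exist e2 Se2)).
  exact (Rmult_integral_contrapositive_currified _ _ JG (diffeo2_jac_neq0 e1 e2 x y He)).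
Qed.

Section Affine.

Variables (g : Fun2) (c a b : R).
Hypothesis Hg : forall x y, g x y = c + a * x + b * y.

Lemma affine_cont2 : cont2 g.
Proof.
  apply cont2_continuity_2d_pt; intros x y.
  apply (continuity_2d_pt_ext (fun x y => c + a * x + b * y)); [intros; symmetry; apply Hg|].
  apply continuity_2d_pt_plus; [apply continuity_2d_pt_plus|];
    [apply continuity_2d_pt_const | |]; apply continuity_2d_pt_mult;
    auto using continuity_2d_pt_const, continuity_2d_pt_id1, continuity_2d_pt_id2.
Qed.

Lemma affine_is_derive_u x y : is_derive (fun s => g s y) x a.
Proof.
  apply (is_derive_ext (fun s => c + a * s + b * y)); [intros; symmetry; apply Hg|].
  auto_derive; [exact I | ring].
Qed.

Lemma affine_is_derive_v x y : is_derive (fun s => g x s) y b.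
Proof.
  apply (is_derive_ext (fun s => c + a * x + b * s)); [intros; symmetry; apply Hg|].
  auto_derive; [exact I | ring].
Qed.

Lemma affine_du x y : du g x y = a.
Proof. exact (is_derive_unique _ _ _ (affine_is_derive_u x y)). Qed.

Lemma affine_dv x y : dv g x y = b.
Proof. exact (is_derive_unique _ _ _ (affine_is_derive_v x y)). Qed.

End Affine.

Lemma affine_Ck k : forall g c a b, (forall x y, g x y = c + a * x + b * y) -> Ck k g.
Proof.
  induction k as [|k IH]; intros g c a b Hg; [exact (affine_cont2 g c a b Hg)|].
  split; [exact (affine_cont2 g c a b Hg)|]; split; [|split].
  - intros x y; split; eexists;
      [exact (affine_is_derive_u g c a b Hg x y) | exact (affine_is_derive_v g c a b Hg x y)].
  - apply (IH _ a 0 0); intros x y; rewrite (affine_du g c a b Hg); ring.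
  - apply (IH _ b 0 0); intros x y; rewrite (affine_dv g c a b Hg); ring.
Qed.

Lemma affine_diffeo2 d1 d2 c1 c2 m11 m12 m21 m22 :
  m11 * m22 - m12 * m21 <> 0 ->
  (forall p q, d1 p q = c1 + m11 * p + m12 * q) ->
  (forall p q, d2 p q = c2 + m21 * p + m22 * q) -> diffeo2 d1 d2.
Proof.
  intros D E1 E2.
  split; [intro k; exact (affine_Ck k _ _ _ _ E1)|].
  split; [intro k; exact (affine_Ck k _ _ _ _ E2)|].
  set (det := m11 * m22 - m12 * m21).
  exists (fun p q => (m22 * (p - c1) - m12 * (q - c2)) / det),
         (fun p q => (m11 * (q - c2) - m21 * (p - c1)) / det).
  split; [|split; [|split]].
  - intro k; apply (affine_Ck k _ ((- m22 * c1 + m12 * c2) / det) (m22 / det) (- m12 / det)).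
    intros; cbv beta; unfold det; field; exact D.
  - intro k; apply (affine_Ck k _ ((- m11 * c2 + m21 * c1) / det) (- m21 / det) (m11 / det)).
    intros; cbv beta; unfold det; field; exact D.
  - intros u v; cbv beta; rewrite E1, E2; unfold det; split; field; exact D.
  - intros u v; cbv beta; rewrite E1, E2; unfold det; split; field; exact D.
Qed.

Lemma affine_reparametrization u v w1 w2 z1 z2 : w1 * z2 - w2 * z1 <> 0 ->
  exists d1 d2, diffeo2 d1 d2 /\ d1 0 0 = u /\ d2 0 0 = v /\
    du d1 0 0 = w1 /\ du d2 0 0 = w2 /\ dv d1 0 0 = z1 /\ dv d2 0 0 = z2.
Proof.
  intros J.
  set (d1 := fun p q => u + w1 * p + z1 * q); set (d2 := fun p q => v + w2 * p + z2 * q).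
  assert (E1 : forall p q, d1 p q = u + w1 * p + z1 * q) by reflexivity.
  assert (E2 : forall p q, d2 p q = v + w2 * p + z2 * q) by reflexivity.
  exists d1, d2; split; [apply (affine_diffeo2 _ _ u v w1 z1 w2 z2); [lra | exact E1 | exact E2]|].
  rewrite E1, E2, (affine_du d1 _ _ _ E1), (affine_du d2 _ _ _ E2), (affine_dv d1 _ _ _ E1),
    (affine_dv d2 _ _ _ E2).
  repeat split; ring.
Qed.

Lemma V3_ext a b : x1 a = x1 b -> x2 a = x2 b -> x3 a = x3 b -> a = b.
Proof. destruct a, b; simpl; intros; subst; reflexivity. Qed.

Lemma V4_ext a b : y1 a = y1 b -> y2 a = y2 b -> y3 a = y3 b -> y4 a = y4 b -> a = b.
Proof. destruct a, b; simpl; intros; subst; reflexivity. Qed.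

Lemma dot3_comm a b : dot3 a b = dot3 b a.
Proof. unfold dot3; ring. Qed.

Lemma dot3_scal3_l c a b : dot3 (scal3 c a) b = c * dot3 a b.
Proof. unfold dot3; simpl; ring. Qed.

Lemma dot3_scal3_r c a b : dot3 a (scal3 c b) = c * dot3 a b.
Proof. unfold dot3; simpl; ring. Qed.

Lemma dot3_add3_l a a' b : dot3 (add3 a a') b = dot3 a b + dot3 a' b.
Proof. unfold dot3; simpl; ring. Qed.

Lemma add3_scal3_lincomb X Y a1 a2 b1 b2 l m :
  add3 (scal3 l (add3 (scal3 a1 X) (scal3 a2 Y))) (scal3 m (add3 (scal3 b1 X) (scal3 b2 Y)))
  = add3 (scal3 (l * a1 + m * b1) X) (scal3 (l * a2 + m * b2) Y).
Proof. apply V3_ext; simpl; ring. Qed.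

Lemma add4_scal4_lincomb X Y a1 a2 b1 b2 l m :
  add4 (scal4 l (add4 (scal4 a1 X) (scal4 a2 Y))) (scal4 m (add4 (scal4 b1 X) (scal4 b2 Y)))
  = add4 (scal4 (l * a1 + m * b1) X) (scal4 (l * a2 + m * b2) Y).
Proof. apply V4_ext; simpl; ring. Qed.

Lemma indep3_cross2 X Y a1 a2 b1 b2 :
  indep3 (add3 (scal3 a1 X) (scal3 a2 Y)) (add3 (scal3 b1 X) (scal3 b2 Y)) ->
  a1 * b2 - a2 * b1 <> 0.
Proof.
  intros Hi D; destruct (cross2_eq0_dependent a1 a2 b1 b2 D) as (l & m & Hlm & E1 & E2).
  enough (l = 0 /\ m = 0) by tauto.
  apply Hi; rewrite add3_scal3_lincomb, E1, E2; apply V3_ext; simpl; ring.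
Qed.

Lemma indep4_cross2 X Y a1 a2 b1 b2 : indep4 X Y ->
  indep4 (add4 (scal4 a1 X) (scal4 a2 Y)) (add4 (scal4 b1 X) (scal4 b2 Y)) <->
  a1 * b2 - a2 * b1 <> 0.
Proof.
  intros HXY; split.
  - intros Hi D; destruct (cross2_eq0_dependent a1 a2 b1 b2 D) as (l & m & Hlm & E1 & E2).
    enough (l = 0 /\ m = 0) by tauto.
    apply Hi; rewrite add4_scal4_lincomb, E1, E2; apply V4_ext; simpl; ring.
  - intros D l m E; rewrite add4_scal4_lincomb in E.
    destruct (HXY _ _ E); now apply (cross2_neq0_trivial a1 a2 b1 b2).
Qed.

Lemma parallel4_refl X : parallel4 X X.
Proof. intros Hi; destruct (Hi 1 (-1)) as [H _]; [apply V4_ext; simpl; ring | lra]. Qed.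

Lemma parallel4_cross2 X Y a1 a2 b1 b2 : indep4 X Y ->
  parallel4 (add4 (scal4 a1 X) (scal4 a2 Y)) (add4 (scal4 b1 X) (scal4 b2 Y)) ->
  a1 * b2 - a2 * b1 = 0.
Proof.
  intros HXY Hp; destruct (Req_dec (a1 * b2 - a2 * b1) 0) as [D | D]; [exact D|].
  exfalso; apply Hp, (indep4_cross2 X Y a1 a2 b1 b2 HXY), D.
Qed.

Definition space (X : V4) : V3 := mkV3 (y1 X) (y2 X) (y3 X).
Definition hyp_normal (m : V3) : V4 := mkV4 (x1 m) (x2 m) (x3 m) 1.

Lemma mink_hyp_normal X m : mink X (hyp_normal m) = dot3 (space X) m - y4 X.
Proof. unfold mink, dot3; simpl; ring. Qed.

Lemma par_hyp_mink m X : par_hyp m X <-> mink X (hyp_normal m) = 0.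
Proof. rewrite mink_hyp_normal; unfold par_hyp, dot3; simpl; split; intros; lra. Qed.

Definition ex_derive3 (X : R -> V3) (t : R) : Prop :=
  ex_derive (fun s => x1 (X s)) t /\ ex_derive (fun s => x2 (X s)) t /\
  ex_derive (fun s => x3 (X s)) t.

Definition Derive3 (X : R -> V3) (t : R) : V3 :=
  mkV3 (Derive (fun s => x1 (X s)) t) (Derive (fun s => x2 (X s)) t)
       (Derive (fun s => x3 (X s)) t).

Lemma is_derive_sum3_mult (a1 a2 a3 b1 b2 b3 : R -> R) t :
  ex_derive a1 t -> ex_derive a2 t -> ex_derive a3 t ->
  ex_derive b1 t -> ex_derive b2 t -> ex_derive b3 t ->
  is_derive (fun s => a1 s * b1 s + a2 s * b2 s + a3 s * b3 s) t
    ((Derive a1 t * b1 t + Derive a2 t * b2 t + Derive a3 t * b3 t)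
     + (a1 t * Derive b1 t + a2 t * Derive b2 t + a3 t * Derive b3 t)).
Proof.
  intros; auto_derive; [repeat split; assumption |].
  change (fun x : R => a1 x) with a1; change (fun x : R => a2 x) with a2;
    change (fun x : R => a3 x) with a3; change (fun x : R => b1 x) with b1;
    change (fun x : R => b2 x) with b2; change (fun x : R => b3 x) with b3.
  ring.
Qed.

Lemma is_derive_dot3 X Y t : ex_derive3 X t -> ex_derive3 Y t ->
  is_derive (fun s => dot3 (X s) (Y s)) t (dot3 (Derive3 X t) (Y t) + dot3 (X t) (Derive3 Y t)).
Proof.
  intros (X1 & X2 & X3) (Y1 & Y2 & Y3).
  exact (is_derive_sum3_mult _ _ _ _ _ _ t X1 X2 X3 Y1 Y2 Y3).
Qed.

Lemma dot3_Derive3_unit X t : (forall s, dot3 (X s) (X s) = 1) -> ex_derive3 X t ->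
  dot3 (X t) (Derive3 X t) = 0.
Proof.
  intros Hunit HX.
  pose proof (is_derive_unique _ _ _ (is_derive_dot3 X X t HX HX)) as H.
  rewrite (Derive_ext _ (fun _ => 1) _ Hunit), Derive_const, (dot3_comm (Derive3 X t)) in H.
  lra.
Qed.

Lemma is_derive_plus_mult (p c q : R -> R) t :
  ex_derive p t -> ex_derive c t -> ex_derive q t ->
  is_derive (fun s => p s + c s * q s) t (Derive p t + (Derive c t * q t + c t * Derive q t)).
Proof.
  intros; auto_derive; [repeat split; assumption |].
  change (fun x : R => p x) with p; change (fun x : R => c x) with c;
    change (fun x : R => q x) with q.
  ring.
Qed.

Lemma Derive3_add_scal X c Y t : ex_derive3 X t -> ex_derive c t -> ex_derive3 Y t ->
  Derive3 (fun s => add3 (X s) (scal3 (c s) (Y s))) t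
  = add3 (Derive3 X t) (add3 (scal3 (Derive c t) (Y t)) (scal3 (c t) (Derive3 Y t))).
Proof.
  intros (X1 & X2 & X3) Hc (Y1 & Y2 & Y3); apply V3_ext; apply is_derive_unique.
  - exact (is_derive_plus_mult _ _ _ t X1 Hc Y1).
  - exact (is_derive_plus_mult _ _ _ t X2 Hc Y2).
  - exact (is_derive_plus_mult _ _ _ t X3 Hc Y3).
Qed.

Lemma smooth3_ex_derive3_u F u v : smooth3 F -> ex_derive3 (fun s => F s v) u.
Proof.
  intros (F1 & F2 & F3); split; [|split];
    [exact (smooth2_ex_derive_u _ u v F1) | exact (smooth2_ex_derive_u _ u v F2)
    | exact (smooth2_ex_derive_u _ u v F3)].
Qed.

Lemma smooth3_ex_derive3_v F u v : smooth3 F -> ex_derive3 (fun s => F u s) v.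
Proof.
  intros (F1 & F2 & F3); split; [|split];
    [exact (smooth2_ex_derive_v _ u v F1) | exact (smooth2_ex_derive_v _ u v F2)
    | exact (smooth2_ex_derive_v _ u v F3)].
Qed.

Definition tangent4 (S : R -> R -> V4) (u v x y : R) : V4 :=
  add4 (scal4 x (du4 S u v)) (scal4 y (dv4 S u v)).

Lemma space_tangent4 S u v x y :
  space (tangent4 S u v x y) = add3 (scal3 x (space (du4 S u v))) (scal3 y (space (dv4 S u v))).
Proof. reflexivity. Qed.

Lemma du3_comp3 F G1 G2 x y :
  smooth3 F -> ex_derive (fun s => G1 s y) x -> ex_derive (fun s => G2 s y) x ->
  du3 (comp3 F G1 G2) x y = tangent F (G1 x y) (G2 x y) (du G1 x y) (du G2 x y).
Proof.
  intros (F1 & F2 & F3) H1 H2; apply V3_ext; cbn [x1 x2 x3 du3 dv3 tangent add3 scal3];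
    unfold comp3.
  - etransitivity; [exact (du_comp _ G1 G2 x y F1 H1 H2) | ring].
  - etransitivity; [exact (du_comp _ G1 G2 x y F2 H1 H2) | ring].
  - etransitivity; [exact (du_comp _ G1 G2 x y F3 H1 H2) | ring].
Qed.

Lemma dv3_comp3 F G1 G2 x y :
  smooth3 F -> ex_derive (fun s => G1 x s) y -> ex_derive (fun s => G2 x s) y ->
  dv3 (comp3 F G1 G2) x y = tangent F (G1 x y) (G2 x y) (dv G1 x y) (dv G2 x y).
Proof.
  intros (F1 & F2 & F3) H1 H2; apply V3_ext; cbn [x1 x2 x3 du3 dv3 tangent add3 scal3];
    unfold comp3.
  - etransitivity; [exact (dv_comp _ G1 G2 x y F1 H1 H2) | ring].
  - etransitivity; [exact (dv_comp _ G1 G2 x y F2 H1 H2) | ring].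
  - etransitivity; [exact (dv_comp _ G1 G2 x y F3 H1 H2) | ring].
Qed.

Lemma du4_comp4 S G1 G2 x y :
  smooth4 S -> ex_derive (fun s => G1 s y) x -> ex_derive (fun s => G2 s y) x ->
  du4 (comp4 S G1 G2) x y = tangent4 S (G1 x y) (G2 x y) (du G1 x y) (du G2 x y).
Proof.
  intros (S1 & S2 & S3 & S4) H1 H2; apply V4_ext; cbn [y1 y2 y3 y4 du4 dv4 tangent4 add4 scal4];
    unfold comp4.
  - etransitivity; [exact (du_comp _ G1 G2 x y S1 H1 H2) | ring].
  - etransitivity; [exact (du_comp _ G1 G2 x y S2 H1 H2) | ring].
  - etransitivity; [exact (du_comp _ G1 G2 x y S3 H1 H2) | ring].
  - etransitivity; [exact (du_comp _ G1 G2 x y S4 H1 H2) | ring].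
Qed.

Lemma dv4_comp4 S G1 G2 x y :
  smooth4 S -> ex_derive (fun s => G1 x s) y -> ex_derive (fun s => G2 x s) y ->
  dv4 (comp4 S G1 G2) x y = tangent4 S (G1 x y) (G2 x y) (dv G1 x y) (dv G2 x y).
Proof.
  intros (S1 & S2 & S3 & S4) H1 H2; apply V4_ext; cbn [y1 y2 y3 y4 du4 dv4 tangent4 add4 scal4];
    unfold comp4.
  - etransitivity; [exact (dv_comp _ G1 G2 x y S1 H1 H2) | ring].
  - etransitivity; [exact (dv_comp _ G1 G2 x y S2 H1 H2) | ring].
  - etransitivity; [exact (dv_comp _ G1 G2 x y S3 H1 H2) | ring].
  - etransitivity; [exact (dv_comp _ G1 G2 x y S4 H1 H2) | ring].
Qed.

(** * Tangent planes and the form II - r III *)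

Lemma shape_tangent n u v x y : shape n u v x y = scal3 (-1) (tangent n u v x y).
Proof. reflexivity. Qed.

Lemma tangent_lincomb f u v c1 c2 x y x' y' :
  tangent f u v (c1 * x + c2 * x') (c1 * y + c2 * y')
  = add3 (scal3 c1 (tangent f u v x y)) (scal3 c2 (tangent f u v x' y')).
Proof. apply V3_ext; unfold tangent; cbn [x1 x2 x3 add3 scal3]; ring. Qed.

Lemma shape_lincomb n u v c1 c2 x y x' y' :
  shape n u v (c1 * x + c2 * x') (c1 * y + c2 * y')
  = add3 (scal3 c1 (shape n u v x y)) (scal3 c2 (shape n u v x' y')).
Proof.
  rewrite !shape_tangent, tangent_lincomb; apply V3_ext; cbn [x1 x2 x3 add3 scal3]; ring.
Qed.

Lemma conjugate_tangent f n u v x y w : indep3 (du3 f u v) (dv3 f u v) ->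
  conjugate f n u v (tangent f u v x y) w <-> dot3 (shape n u v x y) w = 0.
Proof.
  intros Hi; split; [|now exists x, y].
  intros (x' & y' & E & Hw).
  enough (x = x' /\ y = y') as [-> ->] by exact Hw.
  destruct (Hi (x - x') (y - y')); [|split; lra].
  pose proof (f_equal x1 E) as E1; pose proof (f_equal x2 E) as E2;
    pose proof (f_equal x3 E) as E3.
  unfold tangent in E1, E2, E3; cbn [x1 x2 x3 add3 scal3] in E1, E2, E3.
  apply V3_ext; cbn [x1 x2 x3 add3 scal3 zero3]; lra.
Qed.

(* II - r III at f(u, v), evaluated on the parameter directions (w1, w2) and (z1, z2). *)
Definition lconj_form (f n : R -> R -> V3) (r : Fun2) (u v w1 w2 z1 z2 : R) : R :=
  dot3 (tangent f u v w1 w2) (shape n u v z1 z2)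
  - r u v * dot3 (shape n u v w1 w2) (shape n u v z1 z2).

Lemma lconj_form_scal f n r u v w1 w2 z1 z2 l m :
  lconj_form f n r u v (l * w1) (l * w2) (m * z1) (m * z2)
  = l * m * lconj_form f n r u v w1 w2 z1 z2.
Proof. unfold lconj_form, shape, tangent, dot3; simpl; ring. Qed.

(** * The Minkowski lift of the sphere congruence *)

Section SphereLift.

Variables (f n : R -> R -> V3) (r : Fun2).
Hypotheses (Hf : smooth3 f) (Hn : unit_normal f n) (Hr : smooth2 r)
  (HS : smooth4 (sphere_lift f n r))
  (HSi : forall u v, indep4 (du4 (sphere_lift f n r) u v) (dv4 (sphere_lift f n r) u v)).

Local Notation S := (sphere_lift f n r).

Lemma dot3_normal_tangent_normal u v x y : dot3 (n u v) (tangent n u v x y) = 0.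
Proof.
  destruct Hn as [Hns Hunit].
  assert (Nu : dot3 (n u v) (du3 n u v) = 0)
    by exact (dot3_Derive3_unit (fun s => n s v) u (fun s => proj1 (Hunit s v))
                (smooth3_ex_derive3_u n u v Hns)).
  assert (Nv : dot3 (n u v) (dv3 n u v) = 0)
    by exact (dot3_Derive3_unit (fun s => n u s) v (fun s => proj1 (Hunit u s))
                (smooth3_ex_derive3_v n u v Hns)).
  unfold tangent; rewrite dot3_comm, dot3_add3_l, !dot3_scal3_l, !(dot3_comm _ (n u v)), Nu, Nv.
  ring.
Qed.

Lemma dot3_normal_tangent u v x y : dot3 (n u v) (tangent f u v x y) = 0.
Proof.
  destruct Hn as [_ Hunit]; destruct (Hunit u v) as (_ & Nu & Nv).
  unfold tangent; rewrite dot3_comm, dot3_add3_l, !dot3_scal3_l, !(dot3_comm _ (n u v)), Nu, Nv.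
  ring.
Qed.

Lemma space_tangent4_lift u v x y :
  space (tangent4 S u v x y)
  = add3 (tangent f u v x y)
      (add3 (scal3 (x * du r u v + y * dv r u v) (n u v)) (scal3 (r u v) (tangent n u v x y))).
Proof.
  pose proof Hn as [Hns _].
  assert (Eu : space (du4 S u v)
    = add3 (du3 f u v) (add3 (scal3 (du r u v) (n u v)) (scal3 (r u v) (du3 n u v))))
    by exact (Derive3_add_scal (fun s => f s v) (fun s => r s v) (fun s => n s v) u
                (smooth3_ex_derive3_u f u v Hf) (smooth2_ex_derive_u r u v Hr)
                (smooth3_ex_derive3_u n u v Hns)).
  assert (Ev : space (dv4 S u v)
    = add3 (dv3 f u v) (add3 (scal3 (dv r u v) (n u v)) (scal3 (r u v) (dv3 n u v))))
    by exact (Derive3_add_scal (fun s => f u s) (fun s => r u s) (fun s => n u s) v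
                (smooth3_ex_derive3_v f u v Hf) (smooth2_ex_derive_v r u v Hr)
                (smooth3_ex_derive3_v n u v Hns)).
  rewrite space_tangent4, Eu, Ev; apply V3_ext; simpl; ring.
Qed.

Lemma mink_tangent4_lift u v x y : mink (tangent4 S u v x y) (hyp_normal (n u v)) = 0.
Proof.
  rewrite mink_hyp_normal, space_tangent4_lift, !dot3_add3_l, !dot3_scal3_l,
    (dot3_comm (tangent f u v x y)), (dot3_comm (tangent n u v x y)),
    dot3_normal_tangent, dot3_normal_tangent_normal, (proj1 (proj2 Hn u v)).
  change (y4 (tangent4 S u v x y)) with (x * du r u v + y * dv r u v); ring.
Qed.

Lemma mink_du4_comp_lift G1 G2 x y : partials_exist G1 -> partials_exist G2 ->
  mink (du4 (comp4 S G1 G2) x y) (hyp_normal (n (G1 x y) (G2 x y))) = 0.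
Proof.
  intros P1 P2; rewrite (du4_comp4 S G1 G2 x y HS (proj1 (P1 x y)) (proj1 (P2 x y))).
  apply mink_tangent4_lift.
Qed.

Lemma mink_dv4_comp_lift G1 G2 x y : partials_exist G1 -> partials_exist G2 ->
  mink (dv4 (comp4 S G1 G2) x y) (hyp_normal (n (G1 x y) (G2 x y))) = 0.
Proof.
  intros P1 P2; rewrite (dv4_comp4 S G1 G2 x y HS (proj2 (P1 x y)) (proj2 (P2 x y))).
  apply mink_tangent4_lift.
Qed.

Lemma mink_dvdu4_comp_lift G1 G2 x y : has_mixed_partial G1 -> has_mixed_partial G2 ->
  mink (dv4 (du4 (comp4 S G1 G2)) x y) (hyp_normal (n (G1 x y) (G2 x y)))
  = lconj_form f n r (G1 x y) (G2 x y) (du G1 x y) (du G2 x y) (dv G1 x y) (dv G2 x y).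
Proof.
  intros M1 M2; pose proof Hn as [N _]; pose proof N as (N1 & N2 & N3).
  pose proof HS as (S1 & S2 & S3 & S4); pose proof M1 as [P1 _]; pose proof M2 as [P2 _].
  set (X := fun s => du4 (comp4 S G1 G2) x s).
  set (m := fun s => n (G1 x s) (G2 x s)).
  assert (HX : ex_derive3 (fun s => space (X s)) y).
  { split; [|split]; [exact (proj2 (has_mixed_partial_comp _ G1 G2 S1 M1 M2) x y)
    | exact (proj2 (has_mixed_partial_comp _ G1 G2 S2 M1 M2) x y)
    | exact (proj2 (has_mixed_partial_comp _ G1 G2 S3 M1 M2) x y)]. }
  assert (Hm : ex_derive3 m y).
  { destruct (P1 x y) as [_ V1], (P2 x y) as [_ V2].
    split; [|split]; eexists; [exact (is_derive_comp2 _ _ _ y N1 V1 V2)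
    | exact (is_derive_comp2 _ _ _ y N2 V1 V2) | exact (is_derive_comp2 _ _ _ y N3 V1 V2)]. }
  (* Differentiate <<S_u, N>> = 0 in the second variable. *)
  assert (Hd : dot3 (space (dv4 (du4 (comp4 S G1 G2)) x y)) (n (G1 x y) (G2 x y))
               + dot3 (space (X y)) (dv3 (comp3 n G1 G2) x y)
               = y4 (dv4 (du4 (comp4 S G1 G2)) x y)).
  { transitivity (Derive (fun s => dot3 (space (X s)) (m s)) y).
    { symmetry; exact (is_derive_unique _ _ _ (is_derive_dot3 _ _ y HX Hm)). }
    change (y4 (dv4 (du4 (comp4 S G1 G2)) x y)) with (Derive (fun s => y4 (X s)) y).
    apply Derive_ext; intros s.
    apply Rminus_diag_uniq; rewrite <- mink_hyp_normal.
    exact (mink_du4_comp_lift G1 G2 x s P1 P2). }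
  rewrite mink_hyp_normal.
  replace (dot3 _ _ - _) with (- dot3 (space (X y)) (dv3 (comp3 n G1 G2) x y)) by lra.
  unfold X; rewrite (du4_comp4 S G1 G2 x y HS (proj1 (P1 x y)) (proj1 (P2 x y))),
    (dv3_comp3 n G1 G2 x y N (proj2 (P1 x y)) (proj2 (P2 x y))), space_tangent4_lift.
  unfold lconj_form; rewrite !shape_tangent, !dot3_add3_l, !dot3_scal3_l, !dot3_scal3_r,
    dot3_normal_tangent_normal.
  ring.
Qed.

Lemma lconj_form_eq0_of_L_conj_net G1 G2 p q :
  smooth2 G1 -> smooth2 G2 -> jac G1 G2 p q <> 0 ->
  L_conj_net (comp4 S G1 G2) (comp3 n G1 G2) p q
    (du4 (comp4 S G1 G2) p q) (dv4 (comp4 S G1 G2) p q) ->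
  lconj_form f n r (G1 p q) (G2 p q) (du G1 p q) (du G2 p q) (dv G1 p q) (dv G2 p q) = 0.
Proof.
  intros SG1 SG2 JG [_ (e1 & e2 & He & p' & q' & Ep & Eq & Hnet)]; cbv zeta in Hnet.
  destruct Hnet as (Pu & Pv & _ & _ & Huv).
  pose proof He as (Se1 & Se2 & _).
  set (H1 := fun a b => G1 (e1 a b) (e2 a b)); set (H2 := fun a b => G2 (e1 a b) (e2 a b)).
  change (comp4 (comp4 S G1 G2) e1 e2) with (comp4 S H1 H2) in Pu, Pv, Huv.
  change (comp3 (comp3 n G1 G2) e1 e2 p' q') with (n (H1 p' q') (H2 p' q')) in Huv.
  assert (EH1 : H1 p' q' = G1 p q) by (unfold H1; rewrite Ep, Eq; reflexivity).
  assert (EH2 : H2 p' q' = G2 p q) by (unfold H2; rewrite Ep, Eq; reflexivity).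
  assert (MH1 : has_mixed_partial H1)
    by exact (has_mixed_partial_comp G1 e1 e2 SG1 (smooth2_has_mixed_partial e1 Se1)
                (smooth2_has_mixed_partial e2 Se2)).
  assert (MH2 : has_mixed_partial H2)
    by exact (has_mixed_partial_comp G2 e1 e2 SG2 (smooth2_has_mixed_partial e1 Se1)
                (smooth2_has_mixed_partial e2 Se2)).
  pose proof (smooth2_partials_exist G1 SG1 p q) as [U1 V1].
  pose proof (smooth2_partials_exist G2 SG2 p q) as [U2 V2].
  pose proof (proj1 MH1 p' q') as [HU1 HV1]; pose proof (proj1 MH2 p' q') as [HU2 HV2].
  rewrite (du4_comp4 S H1 H2 p' q' HS HU1 HU2), (du4_comp4 S G1 G2 p q HS U1 U2), EH1, EH2
    in Pu.
  rewrite (dv4_comp4 S H1 H2 p' q' HS HV1 HV2), (dv4_comp4 S G1 G2 p q HS V1 V2), EH1, EH2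
    in Pv.
  apply (parallel4_cross2 _ _ _ _ _ _ (HSi (G1 p q) (G2 p q))) in Pu, Pv.
  (* The reparametrization e only rescales the coordinate directions of G. *)
  destruct (cross2_parallel_basis _ _ _ _ _ _ _ _ JG Pu Pv)
    as (l & m & Hlm & Hx1 & Hx2 & Hy1 & Hy2).
  { apply (jac_comp_diffeo2_neq0 G1 G2 e1 e2 p' q' SG1 SG2 He); rewrite Ep, Eq; exact JG. }
  apply par_hyp_mink in Huv.
  rewrite (mink_dvdu4_comp_lift H1 H2 p' q' MH1 MH2), EH1, EH2,
    Hx1, Hx2, Hy1, Hy2, lconj_form_scal in Huv.
  destruct (Rmult_integral _ _ Huv); [contradiction | assumption].
Qed.

Lemma L_conj_net_of_lconj_form_eq0 G1 G2 p q :
  smooth2 G1 -> smooth2 G2 -> jac G1 G2 p q <> 0 ->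
  lconj_form f n r (G1 p q) (G2 p q) (du G1 p q) (du G2 p q) (dv G1 p q) (dv G2 p q) = 0 ->
  L_conj_net (comp4 S G1 G2) (comp3 n G1 G2) p q
    (du4 (comp4 S G1 G2) p q) (dv4 (comp4 S G1 G2) p q).
Proof.
  intros SG1 SG2 JG Hform.
  pose proof (smooth2_has_mixed_partial G1 SG1) as MG1.
  pose proof (smooth2_has_mixed_partial G2 SG2) as MG2.
  split.
  { pose proof (smooth2_partials_exist G1 SG1 p q) as [U1 V1].
    pose proof (smooth2_partials_exist G2 SG2 p q) as [U2 V2].
    rewrite (du4_comp4 S G1 G2 p q HS U1 U2), (dv4_comp4 S G1 G2 p q HS V1 V2).
    exact (proj2 (indep4_cross2 _ _ _ _ _ _ (HSi (G1 p q) (G2 p q))) JG). }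
  exists (fun a _ => a), (fun _ b => b); split.
  { apply (affine_diffeo2 _ _ 0 0 1 0 0 1); [lra | intros; ring | intros; ring]. }
  exists p, q; do 2 (split; [reflexivity|]); cbv zeta.
  split; [apply parallel4_refl|]; split; [apply parallel4_refl|].
  split; [|split]; apply par_hyp_mink.
  - exact (mink_du4_comp_lift G1 G2 p q (proj1 MG1) (proj1 MG2)).
  - exact (mink_dv4_comp_lift G1 G2 p q (proj1 MG1) (proj1 MG2)).
  - rewrite <- Hform; exact (mink_dvdu4_comp_lift G1 G2 p q MG1 MG2).
Qed.

End SphereLift.

Lemma L_conj_sphere_iff_directions f n r u v a b :
  regular_surface f -> unit_normal f n -> tangent_sphere_congruence f n r ->
  L_conj_sphere f n r u v a b <->
  indep3 a b /\ exists w1 w2 z1 z2, w1 * z2 - w2 * z1 <> 0 /\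
    dot3 (shape n u v w1 w2) a = 0 /\ dot3 (shape n u v z1 z2) b = 0 /\
    lconj_form f n r u v w1 w2 z1 z2 = 0.
Proof.
  intros [Hf Hfreg] Hn (Hr & HS & HSi); split.
  - intros [Hab (d1 & d2 & Hd & p & q & Ep & Eq & Hconj)]; cbv zeta in Hconj.
    destruct Hconj as (Ca & Cb & Hnet); split; [exact Hab|].
    pose proof Hd as (Sd1 & Sd2 & _); pose proof (diffeo2_jac_neq0 d1 d2 p q Hd) as J.
    pose proof (smooth2_partials_exist d1 Sd1 p q) as [U1 V1].
    pose proof (smooth2_partials_exist d2 Sd2 p q) as [U2 V2].
    rewrite (du3_comp3 f d1 d2 p q Hf U1 U2), Ep, Eq, conjugate_tangent in Ca by apply Hfreg.
    rewrite (dv3_comp3 f d1 d2 p q Hf V1 V2), Ep, Eq, conjugate_tangent in Cb by apply Hfreg.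
    apply (lconj_form_eq0_of_L_conj_net f n r Hf Hn Hr HS HSi d1 d2 p q Sd1 Sd2 J) in Hnet.
    rewrite Ep, Eq in Hnet.
    exists (du d1 p q), (du d2 p q), (dv d1 p q), (dv d2 p q); tauto.
  - intros [Hab (w1 & w2 & z1 & z2 & J & Ca & Cb & Hform)]; split; [exact Hab|].
    destruct (affine_reparametrization u v w1 w2 z1 z2 J)
      as (d1 & d2 & Hd & D10 & D20 & Du1 & Du2 & Dv1 & Dv2).
    pose proof Hd as (Sd1 & Sd2 & _).
    pose proof (smooth2_partials_exist d1 Sd1 0 0) as [U1 V1].
    pose proof (smooth2_partials_exist d2 Sd2 0 0) as [U2 V2].
    exists d1, d2; split; [exact Hd|]; exists 0, 0; do 2 (split; [assumption|]); cbv zeta.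
    rewrite (du3_comp3 f d1 d2 0 0 Hf U1 U2), (dv3_comp3 f d1 d2 0 0 Hf V1 V2), D10, D20,
      Du1, Du2, Dv1, Dv2, !conjugate_tangent by apply Hfreg.
    do 2 (split; [assumption|]).
    apply (L_conj_net_of_lconj_form_eq0 f n r Hf Hn Hr HS HSi d1 d2 0 0 Sd1 Sd2
             (diffeo2_jac_neq0 d1 d2 0 0 Hd)).
    rewrite D10, D20, Du1, Du2, Dv1, Dv2; exact Hform.
Qed.

(** * Principal frames *)

Section PrincipalFrame.

Variables (f n : R -> R -> V3) (r : Fun2) (u v k1 k2 al1 be1 al2 be2 : R) (t1 t2 : V3).
Hypotheses (H11 : dot3 t1 t1 = 1) (H22 : dot3 t2 t2 = 1) (H12 : dot3 t1 t2 = 0)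
  (T1 : t1 = tangent f u v al1 be1) (K1 : shape n u v al1 be1 = scal3 k1 t1)
  (T2 : t2 = tangent f u v al2 be2) (K2 : shape n u v al2 be2 = scal3 k2 t2).

(* Gram determinants: 1 = |t1|^2 |t2|^2 - (t1.t2)^2
   = (al1 be2 - be1 al2)^2 (|f_u|^2 |f_v|^2 - (f_u.f_v)^2). *)
Lemma principal_frame_cross2_neq0 : al1 * be2 - be1 * al2 <> 0.
Proof.
  intros D.
  assert (Gram : dot3 t1 t1 * dot3 t2 t2 - dot3 t1 t2 * dot3 t1 t2
                 = (al1 * be2 - be1 * al2) ^ 2
                   * (dot3 (du3 f u v) (du3 f u v) * dot3 (dv3 f u v) (dv3 f u v)
                      - dot3 (du3 f u v) (dv3 f u v) * dot3 (du3 f u v) (dv3 f u v)))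
    by (rewrite T1, T2; unfold tangent, dot3; cbn [x1 x2 x3 add3 scal3]; ring).
  rewrite D, H11, H22, H12 in Gram; lra.
Qed.

Lemma tangent_principal_frame c1 c2 :
  tangent f u v (c1 * al1 + c2 * al2) (c1 * be1 + c2 * be2) = add3 (scal3 c1 t1) (scal3 c2 t2).
Proof. now rewrite tangent_lincomb, <- T1, <- T2. Qed.

Lemma shape_principal_frame c1 c2 :
  shape n u v (c1 * al1 + c2 * al2) (c1 * be1 + c2 * be2)
  = add3 (scal3 (k1 * c1) t1) (scal3 (k2 * c2) t2).
Proof. rewrite shape_lincomb, K1, K2; apply V3_ext; cbn [x1 x2 x3 add3 scal3]; ring. Qed.

Lemma dot3_principal_frame A1 A2 B1 B2 :
  dot3 (add3 (scal3 A1 t1) (scal3 A2 t2)) (add3 (scal3 B1 t1) (scal3 B2 t2)) = A1 * B1 + A2 * B2.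
Proof.
  transitivity (A1 * B1 * dot3 t1 t1 + (A1 * B2 + A2 * B1) * dot3 t1 t2 + A2 * B2 * dot3 t2 t2).
  - unfold dot3; cbn [x1 x2 x3 add3 scal3]; ring.
  - rewrite H11, H22, H12; ring.
Qed.

Lemma lconj_form_principal_frame c1 c2 d1 d2 :
  lconj_form f n r u v (c1 * al1 + c2 * al2) (c1 * be1 + c2 * be2)
    (d1 * al1 + d2 * al2) (d1 * be1 + d2 * be2)
  = k1 * (1 - r u v * k1) * c1 * d1 + k2 * (1 - r u v * k2) * c2 * d2.
Proof.
  unfold lconj_form; rewrite tangent_principal_frame, !shape_principal_frame,
    !dot3_principal_frame; ring.
Qed.

(* The directions conjugate to a1 t1 + a2 t2 and b1 t1 + b2 t2 have frame coordinates
   proportional to (A1, A2) = (k2 a2, - k1 a1) and (B1, B2) = (k2 b2, - k1 b1). *)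
Lemma principal_frame_directions_iff a1 a2 b1 b2 :
  k1 <> 0 -> k2 <> 0 -> a1 * b2 - a2 * b1 <> 0 ->
  (exists w1 w2 z1 z2, w1 * z2 - w2 * z1 <> 0 /\
     dot3 (shape n u v w1 w2) (add3 (scal3 a1 t1) (scal3 a2 t2)) = 0 /\
     dot3 (shape n u v z1 z2) (add3 (scal3 b1 t1) (scal3 b2 t2)) = 0 /\
     lconj_form f n r u v w1 w2 z1 z2 = 0)
  <-> (/ k2 - r u v) * a1 * b1 + (/ k1 - r u v) * a2 * b2 = 0.
Proof.
  intros Hk1 Hk2 Dab; pose proof principal_frame_cross2_neq0 as DM.
  set (A1 := k2 * a2); set (A2 := - k1 * a1); set (B1 := k2 * b2); set (B2 := - k1 * b1).
  assert (DAB : A1 * B2 - A2 * B1 <> 0).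
  { replace (A1 * B2 - A2 * B1) with (k1 * k2 * (a1 * b2 - a2 * b1))
      by (unfold A1, A2, B1, B2; ring).
    repeat apply Rmult_integral_contrapositive_currified; assumption. }
  assert (Hform : k1 * (1 - r u v * k1) * A1 * B1 + k2 * (1 - r u v * k2) * A2 * B2
                  = k1 ^ 2 * k2 ^ 2 * ((/ k2 - r u v) * a1 * b1 + (/ k1 - r u v) * a2 * b2))
    by (unfold A1, A2, B1, B2; field; split; assumption).
  split.
  - intros (w1 & w2 & z1 & z2 & J & Ca & Cb & Hf).
    destruct (cross2_neq0_solve al1 be1 al2 be2 w1 w2 DM) as (c1 & c2 & -> & ->).
    destruct (cross2_neq0_solve al1 be1 al2 be2 z1 z2 DM) as (d1 & d2 & -> & ->).
    rewrite shape_principal_frame, dot3_principal_frame in Ca, Cb.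
    rewrite lconj_form_principal_frame in Hf.
    destruct (cross2_parallel_basis c1 c2 d1 d2 A1 A2 B1 B2 DAB)
      as (l & m & Hlm & -> & -> & -> & ->); [unfold A1, A2; lra | unfold B1, B2; lra | |].
    { intros Z; apply J.
      transitivity ((al1 * be2 - be1 * al2) * (c1 * d2 - c2 * d1)); [ring | rewrite Z; ring]. }
    apply (Rmult_eq_reg_l (l * m * (k1 ^ 2 * k2 ^ 2))).
    + rewrite Rmult_0_r, Rmult_assoc, <- Hform, <- Hf; ring.
    + apply Rmult_integral_contrapositive_currified; [exact Hlm|].
      apply Rmult_integral_contrapositive_currified; apply pow_nonzero; assumption.
  - intros Ht.
    exists (A1 * al1 + A2 * al2), (A1 * be1 + A2 * be2),
           (B1 * al1 + B2 * al2), (B1 * be1 + B2 * be2).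
    repeat split.
    + intros Z; apply (Rmult_integral_contrapositive_currified _ _ DM DAB); rewrite <- Z; ring.
    + rewrite shape_principal_frame, dot3_principal_frame; unfold A1, A2; ring.
    + rewrite shape_principal_frame, dot3_principal_frame; unfold B1, B2; ring.
    + rewrite lconj_form_principal_frame, Hform, Ht; ring.
Qed.

End PrincipalFrame.

Theorem theorem2
  (f n : R -> R -> V3) (k1 k2 : Fun2) (r : Fun2)
  (u v : R) (t1 t2 : V3) (a1 a2 b1 b2 : R) :
  regular_surface f ->
  unit_normal f n ->
  (* no umbilic / parabolic points: distinct nonzero principal curvatures *)
  (forall u' v', k1 u' v' <> k2 u' v' /\ k1 u' v' <> 0 /\ k2 u' v' <> 0 /\
     principal_curvature f n u' v' (k1 u' v') /\
     principal_curvature f n u' v' (k2 u' v')) ->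
  tangent_sphere_congruence f n r ->
  (* orthonormal principal frame (t1, t2, n) at f(u,v) *)
  dot3 t1 t1 = 1 -> dot3 t2 t2 = 1 -> dot3 t1 t2 = 0 ->
  principal_dir f n u v (k1 u v) t1 ->
  principal_dir f n u v (k2 u v) t2 ->
  let a := add3 (scal3 a1 t1) (scal3 a2 t2) in
  let b := add3 (scal3 b1 t1) (scal3 b2 t2) in
  indep3 a b ->
  (L_conj_sphere f n r u v a b <->
   (/ k2 u v - r u v) * a1 * b1 + (/ k1 u v - r u v) * a2 * b2 = 0).
Proof.
  intros Hf Hn Hk Hs H11 H22 H12 [_ (al1 & be1 & T1 & K1)] [_ (al2 & be2 & T2 & K2)] a b Hab.
  (* Only k1, k2 <> 0 at (u, v) is used. *)
  destruct (Hk u v) as (_ & Hk1 & Hk2 & _).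
  rewrite (L_conj_sphere_iff_directions f n r u v a b Hf Hn Hs).
  rewrite <- (principal_frame_directions_iff f n r u v (k1 u v) (k2 u v) al1 be1 al2 be2 t1 t2
               H11 H22 H12 T1 K1 T2 K2 a1 a2 b1 b2 Hk1 Hk2 (indep3_cross2 t1 t2 a1 a2 b1 b2 Hab)).
  tauto.
Qed.
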